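(* Let $X$ be a smooth projective surface over an algebraically closed field of characteristic zero and $D=D_1+\cdots+D_n$ a strict normal crossings divisor with smooth irreducible components. Let $E$ be a vector bundle of rank $r$ on $X$ with, for each $i$, a full flag of subbundles $0=F^i_0\subset F^i_1\subset\cdots\subset F^i_r=E|_{D_i}$ and real weights $\alpha(D_i,1),\dots,\alpha(D_i,r)$. Put $Gr(D_i,k):=F^i_k/F^i_{k-1}$ (a line bundle on $D_i$), $\deg Gr(D_i,k)$ its degree, $\alpha^{tot}(D_i):=\sum_{k=1}^r\alpha(D_i,k)$ and $\beta(D_i,k):=\alpha(D_i,k)-\alpha^{tot}(D_i)/r$. Then $$\Delta^{Par}(E)=\Delta^{Vb}(E)+\sum_{i}\sum_{k=1}^r\beta(D_i,k)\deg Gr(D_i,k)-\frac12\sum_i\sum_{k=1}^r\beta(D_i,k)^2\,(D_i\cdot D_i)-\frac12\sum_{i\neq j}\ \sum_{y\in D_i\cap D_j}\ \sum_{k=1}^r\beta(D_i,k)\,\beta(D_j,\sigma(y,i,j)(k)),$$ where the sum over $i\ne j$ runs over ordered pairs.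
   Context: All Chern classes are taken in $A^*(X)\otimes\mathbb{Q}$ and classes of degree 2 are identified with rational numbers via the degree. For a rank $r$ bundle, $\Delta^{Vb}(E):=\frac{1}{2r}ch_1(E)^2-ch_2(E)$. For $y\in D_i\cap D_j$ ($i\neq j$), $\sigma(y,i,j)$ is the permutation of $\{1,\dots,r\}$ sending $k$ to the unique $l$ such that $\big(F^i_k(y)\cap F^j_l(y)\big)/\big(F^i_{k-1}(y)\cap F^j_l(y)+F^i_k(y)\cap F^j_{l-1}(y)\big)\neq0$ (fibers at $y$). The parabolic Chern characters are defined by $ch_1^{Par}(E):=ch_1(E)-\sum_i\sum_k\alpha(D_i,k)[D_i]$ and $ch_2^{Par}(E):=ch_2(E)-\sum_i\sum_k\alpha(D_i,k)\deg Gr(D_i,k)+\frac12\sum_i\sum_k\alpha(D_i,k)^2(D_i\cdot D_i)+\frac12\sum_{i\ne j}\sum_{y\in D_i\cap D_j}\sum_k\alpha(D_i,k)\alpha(D_j,\sigma(y,i,j)(k))$ (ordered pairs $i\neq j$), and $\Delta^{Par}(E):=\frac{1}{2r}ch_1^{Par}(E)^2-ch_2^{Par}(E)$. *)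

From HB Require Import structures.
From mathcomp Require Import all_boot all_order all_algebra all_fingroup.
Set Implicit Arguments. Unset Strict Implicit. Unset Printing Implicit Defensive.
Import Order.TTheory GRing.Theory Num.Theory.
Local Open Scope ring_scope.

Section ParabolicChern.
Variables (R : realFieldType) (V : lmodType R).
(* dot = intersection pairing on A^1(X) (x) R, with values identified with
   numbers via the degree *)
Variable dot : V -> V -> R.
Variables (n r : nat).
Variables (c1E : V) (ch2E : R).
Variable D : 'I_n -> V.
Variable alpha : 'I_n -> 'I_r -> R.         (* alpha(D_i,k), k = 0..r-1 *)
Variable degGr : 'I_n -> 'I_r -> R.
Variable Y : 'I_n -> 'I_n -> finType.       (* points of D_i \cap D_j *)
Variable sigma : forall i j : 'I_n, Y i j -> {perm 'I_r}.

Definition ch1 : V := c1E.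
Definition ch2 : R := ch2E.

Definition DeltaVb : R := (2 * r%:R)^-1 * dot ch1 ch1 - ch2.

Definition ch1Par : V :=
  ch1 - \sum_(i < n) \sum_(k < r) alpha i k *: D i.

Definition ch2Par : R :=
  ch2 - \sum_(i < n) \sum_(k < r) alpha i k * degGr i k
  + 2^-1 * \sum_(i < n) \sum_(k < r) alpha i k ^+ 2 * dot (D i) (D i)
  + 2^-1 * \sum_(i < n) \sum_(j < n | j != i) \sum_(y : Y i j)
             \sum_(k < r) alpha i k * alpha j (sigma y k).

Definition DeltaPar : R := (2 * r%:R)^-1 * dot ch1Par ch1Par - ch2Par.

Definition alpha_tot (i : 'I_n) : R := \sum_(k < r) alpha i k.

Definition beta (i : 'I_n) (k : 'I_r) : R := alpha i k - alpha_tot i / r%:R.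

End ParabolicChern.

(** Replacing the
    weights [alpha] by their centred versions [beta] changes each weighted sum
    only by the terms coming from the total weights [alpha^tot(D_i)/r]; these
    are exactly the terms produced by expanding [ch_1^Par(E)^2 / 2r], because
    the degrees of the graded pieces on [D_i] add up to [ch_1(E).D_i] and two
    distinct components meet in [D_i.D_j] points. *)
From HB Require Import structures.
From mathcomp Require Import all_boot all_order all_algebra all_fingroup.
From mathcomp Require Import ring.
Set Implicit Arguments. Unset Strict Implicit. Unset Printing Implicit Defensive.
Import Order.TTheory GRing.Theory Num.Theory.
Local Open Scope ring_scope.

Section CenteredSums.
Variables (F : fieldType) (r : nat).
Implicit Types a b : 'I_r -> F.

Lemma sum_centered_mulr a b :
  \sum_(k < r) (a k - (\sum_(l < r) a l) / r%:R) * b k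
  = \sum_(k < r) a k * b k - (\sum_(k < r) a k) * (\sum_(k < r) b k) / r%:R.
Proof.
rewrite mulrAC mulr_sumr -sumrB.
by apply: eq_bigr => k _; rewrite mulrBl.
Qed.

Lemma sum_centered a : r%:R != 0 :> F ->
  \sum_(k < r) (a k - (\sum_(l < r) a l) / r%:R) = 0.
Proof.
move=> rN0; rewrite sumrB sumr_const card_ord -[_ *+ r]mulr_natr.
by rewrite divfK // subrr.
Qed.

Lemma sum_centered_mul_centered a b : r%:R != 0 :> F ->
  \sum_(k < r) (a k - (\sum_(l < r) a l) / r%:R)
               * (b k - (\sum_(l < r) b l) / r%:R)
  = \sum_(k < r) a k * b k - (\sum_(k < r) a k) * (\sum_(k < r) b k) / r%:R.
Proof.
move=> rN0; rewrite -sum_centered_mulr.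
under eq_bigr do rewrite mulrBr.
by rewrite sumrB -mulr_suml sum_centered // mul0r subr0.
Qed.

End CenteredSums.

Section CenteredWeights.
Variables (R : realFieldType) (n r : nat) (alpha : 'I_n -> 'I_r -> R).
Hypothesis r_gt0 : (0 < r)%N.

Let rN0 : r%:R != 0 :> R. Proof. by rewrite pnatr_eq0 -lt0n. Qed.

Lemma sum_beta_mulr i (d : 'I_r -> R) :
  \sum_(k < r) beta alpha i k * d k
  = \sum_(k < r) alpha i k * d k - alpha_tot alpha i * (\sum_(k < r) d k) / r%:R.
Proof. exact: sum_centered_mulr. Qed.

Lemma sum_beta_sq i :
  \sum_(k < r) beta alpha i k ^+ 2
  = \sum_(k < r) alpha i k ^+ 2 - alpha_tot alpha i ^+ 2 / r%:R.
Proof.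
rewrite /beta /alpha_tot !(eq_bigr _ (fun k _ => expr2 _)).
by rewrite sum_centered_mul_centered // expr2.
Qed.

Lemma sum_beta_perm_mul_beta i j (s : {perm 'I_r}) :
  \sum_(k < r) beta alpha i k * beta alpha j (s k)
  = \sum_(k < r) alpha i k * alpha j (s k)
    - alpha_tot alpha i * alpha_tot alpha j / r%:R.
Proof.
have tot_perm : alpha_tot alpha j = \sum_(l < r) alpha j (s l).
  by rewrite /alpha_tot (reindex_inj (h := s) perm_inj).
by rewrite /beta tot_perm /alpha_tot (sum_centered_mul_centered _ (alpha j \o s)).
Qed.

End CenteredWeights.

Section SymmetricBilinear.
Variables (R : comPzRingType) (V : lmodType R) (dot : V -> V -> R).
Hypothesis dot_sym : forall u v, dot u v = dot v u.
Hypothesis dot_addl : forall u v w, dot (u + v) w = dot u w + dot v w.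
Hypothesis dot_scalel : forall (a : R) u w, dot (a *: u) w = a * dot u w.

Lemma dot0l w : dot 0 w = 0.
Proof. by rewrite -(scale0r (0 : V)) dot_scalel mul0r. Qed.

Lemma dotNl u w : dot (- u) w = - dot u w.
Proof. by rewrite -scaleN1r dot_scalel mulN1r. Qed.

Lemma dot_suml (I : finType) (P : pred I) (F : I -> V) w :
  dot (\sum_(i | P i) F i) w = \sum_(i | P i) dot (F i) w.
Proof. exact: (big_morph (dot^~ w) (fun u v => dot_addl u v w) (dot0l w)). Qed.

Lemma dotBB u v : dot (u - v) (u - v) = dot u u - dot u v *+ 2 + dot v v.
Proof.
rewrite !dot_addl !dotNl (dot_sym u) (dot_sym v) !dot_addl !dotNl (dot_sym v u).
by rewrite mulr2n opprD opprK opprD !addrA.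
Qed.

Lemma dot_sum_scale n (t : 'I_n -> R) (D : 'I_n -> V) :
  dot (\sum_(i < n) t i *: D i) (\sum_(i < n) t i *: D i)
  = \sum_(i < n) (t i ^+ 2 * dot (D i) (D i)
                  + \sum_(j < n | j != i) t i * t j * dot (D i) (D j)).
Proof.
rewrite dot_suml; apply: eq_bigr => i _.
rewrite dot_scalel dot_sym dot_suml (bigD1 i) //= mulrDr dot_scalel mulrA -expr2.
congr (_ + _); rewrite mulr_sumr; apply: eq_bigr => j _.
by rewrite dot_scalel (dot_sym (D j)) mulrA.
Qed.

End SymmetricBilinear.

Section ParabolicDiscriminant.
Variables (R : realFieldType) (V : lmodType R) (dot : V -> V -> R).
Hypothesis dot_sym : forall u v, dot u v = dot v u.
Hypothesis dot_addl : forall u v w, dot (u + v) w = dot u w + dot v w.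
Hypothesis dot_scalel : forall (a : R) u w, dot (a *: u) w = a * dot u w.
Variables (n r : nat) (c1E : V) (ch2E : R) (D : 'I_n -> V).
Variables (alpha : 'I_n -> 'I_r -> R) (degGr : 'I_n -> 'I_r -> R).
Variables (Y : 'I_n -> 'I_n -> finType) (sigma : forall i j, Y i j -> {perm 'I_r}).
Hypothesis hdeg : forall i, \sum_(k < r) degGr i k = dot c1E (D i).
Hypothesis hcross : forall i j, i != j -> dot (D i) (D j) = #|Y i j|%:R.

Let tot := alpha_tot alpha.

Lemma DeltaParE :
  DeltaPar dot c1E ch2E D alpha degGr sigma =
    DeltaVb dot r c1E ch2E
    + \sum_(i < n) (\sum_(k < r) alpha i k * degGr i k
                    - tot i * (\sum_(k < r) degGr i k) / r%:R)
    - 2^-1 * \sum_(i < n) (\sum_(k < r) alpha i k ^+ 2 - tot i ^+ 2 / r%:R)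
                          * dot (D i) (D i)
    - 2^-1 * \sum_(i < n) \sum_(j < n | j != i) \sum_(y : Y i j)
               (\sum_(k < r) alpha i k * alpha j (sigma y k)
                - tot i * tot j / r%:R).
Proof.
set S1 := \sum_(i < n) \sum_(k < r) alpha i k * degGr i k.
set S3 := \sum_(i < n) \sum_(k < r) alpha i k ^+ 2 * dot (D i) (D i).
set X := \sum_(i < n) \sum_(j < n | j != i) \sum_(y : Y i j)
           \sum_(k < r) alpha i k * alpha j (sigma y k).
set Tc := \sum_(i < n) tot i * dot c1E (D i).
set T2 := \sum_(i < n) tot i ^+ 2 * dot (D i) (D i).
set Tx := \sum_(i < n) \sum_(j < n | j != i) tot i * tot j * #|Y i j|%:R.
have ch1ParE : ch1Par c1E D alpha = c1E - \sum_(i < n) tot i *: D i.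
  by congr (_ - _); apply: eq_bigr => i _; rewrite -scaler_suml.
have dot_c1E_T : dot c1E (\sum_(i < n) tot i *: D i) = Tc.
  by rewrite dot_sym dot_suml //; apply: eq_bigr => i _; rewrite dot_scalel dot_sym.
have dot_T_T : dot (\sum_(i < n) tot i *: D i) (\sum_(i < n) tot i *: D i) = T2 + Tx.
  rewrite dot_sum_scale // big_split /=; congr (_ + _).
  apply: eq_bigr => i _; apply: eq_bigr => j ji.
  by rewrite hcross // eq_sym.
have degree_terms : \sum_(i < n) (\sum_(k < r) alpha i k * degGr i k
                        - tot i * (\sum_(k < r) degGr i k) / r%:R) = S1 - Tc / r%:R.
  by rewrite sumrB mulr_suml; congr (_ - _); apply: eq_bigr => i _; rewrite hdeg.
have self_terms : \sum_(i < n) (\sum_(k < r) alpha i k ^+ 2 - tot i ^+ 2 / r%:R)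
                       * dot (D i) (D i) = S3 - T2 / r%:R.
  rewrite mulr_suml -sumrB; apply: eq_bigr => i _.
  by rewrite mulrBl mulr_suml mulrAC.
have cross_terms : \sum_(i < n) \sum_(j < n | j != i) \sum_(y : Y i j)
            (\sum_(k < r) alpha i k * alpha j (sigma y k) - tot i * tot j / r%:R)
          = X - Tx / r%:R.
  rewrite mulr_suml -sumrB; apply: eq_bigr => i _.
  rewrite mulr_suml -sumrB; apply: eq_bigr => j _.
  by rewrite sumrB sumr_const -[_ *+ _]mulr_natr mulrAC.
rewrite degree_terms self_terms cross_terms /DeltaPar /ch2Par /DeltaVb /ch1 /ch2.
rewrite ch1ParE dotBB // dot_c1E_T dot_T_T -/S1 -/S3 -/X invfM.
(* With [r^-1] abstracted, [field] needs no hypothesis [r != 0]. *)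
set ri := (r%:R)^-1; by field.
Qed.

End ParabolicDiscriminant.

Theorem mainTheorem1
  (R : realFieldType) (V : lmodType R) (dot : V -> V -> R)
  (dot_sym : forall u v, dot u v = dot v u)
  (dot_addl : forall u v w, dot (u + v) w = dot u w + dot v w)
  (dot_scalel : forall (a : R) u w, dot (a *: u) w = a * dot u w)
  (n r : nat) (r_gt0 : (0 < r)%N)
  (c1E : V) (ch2E : R) (D : 'I_n -> V)
  (alpha : 'I_n -> 'I_r -> R) (degGr : 'I_n -> 'I_r -> R)
  (Y : 'I_n -> 'I_n -> finType)
  (sigma : forall i j : 'I_n, Y i j -> {perm 'I_r})
  (hdeg : forall i, \sum_(k < r) degGr i k = dot c1E (D i))
  (hcross : forall i j, i != j -> dot (D i) (D j) = #|Y i j|%:R) :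
  DeltaPar dot c1E ch2E D alpha degGr sigma =
    DeltaVb dot r c1E ch2E
    + \sum_(i < n) \sum_(k < r) beta alpha i k * degGr i k
    - 2^-1 * \sum_(i < n) \sum_(k < r) beta alpha i k ^+ 2 * dot (D i) (D i)
    - 2^-1 * \sum_(i < n) \sum_(j < n | j != i) \sum_(y : Y i j)
               \sum_(k < r) beta alpha i k * beta alpha j (sigma i j y k).
Proof.
rewrite (DeltaParE dot_sym dot_addl dot_scalel ch2E alpha sigma hdeg hcross).
congr (_ + _ - 2^-1 * _ - 2^-1 * _); apply: eq_bigr => i _.
- by rewrite sum_beta_mulr.
- by rewrite -mulr_suml sum_beta_sq.
- apply: eq_bigr => j _; apply: eq_bigr => y _.
  by rewrite sum_beta_perm_mul_beta.
Qed.
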